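(* Let $(C,\mathfrak p,\mathfrak d)$ be a regular $q$-cycle coalgebra with $\mathfrak p_{11}^1\ne0$. Then $\mathfrak d=\mathfrak p$ (equivalently, the associated solution of the braid equation is involutive).
   Context: $K$ is an algebraically closed field of characteristic $0$ and $n\ge2$. $C$ is the coalgebra dual to $K[y]/\langle y^n\rangle$: basis $x_0,\dots,x_{n-1}$, $\Delta(x_i)=\sum_{j+k=i}x_j\otimes x_k$, $\epsilon(x_i)=\delta_{i0}$; $C\otimes C$ has the tensor product coalgebra structure; Sweedler notation $\Delta(b)=b_{(1)}\otimes b_{(2)}$. For linear maps $\mathfrak p,\mathfrak d\colon C\otimes C\to C$ write $a\cdot b=\mathfrak p(a\otimes b)$, $a:b=\mathfrak d(a\otimes b)$, $\mathfrak p(x_i\otimes x_j)=\sum_{k=0}^{n-1}\mathfrak p_{ij}^kx_k$, $\mathfrak d(x_i\otimes x_j)=\sum_{k=0}^{n-1}\mathfrak d_{ij}^kx_k$. A triple $(C,\mathfrak p,\mathfrak d)$ with $\mathfrak p,\mathfrak d$ coalgebra morphisms is a regular $q$-magma coalgebra if there are coalgebra morphisms $a\otimes b\mapsto a^b$, $a\otimes b\mapsto a_b$ from $C\otimes C$ to $C$ with $a^{b_{(1)}}\cdot b_{(2)}=(a\cdot b_{(1)})^{b_{(2)}}=\epsilon(b)a$ and $(a:b_{(2)})_{b_{(1)}}=a_{b_{(2)}}:b_{(1)}=\epsilon(b)a$. It is a regular $q$-cycle coalgebra if moreover for all $a,b,c$: (1) $(a\cdot b_{(1)})\cdot(c:b_{(2)})=(a\cdot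 c_{(2)})\cdot(b\cdot c_{(1)})$; (2) $(a\cdot b_{(1)}):(c\cdot b_{(2)})=(a:c_{(2)})\cdot(b:c_{(1)})$; (3) $(a:b_{(1)}):(c:b_{(2)})=(a:c_{(2)}):(b\cdot c_{(1)})$. *)

From HB Require Import structures.
From mathcomp Require Import all_boot all_order all_algebra.
Set Implicit Arguments. Unset Strict Implicit. Unset Printing Implicit Defensive.
Import GRing.Theory.
Local Open Scope ring_scope.

(* The coalgebra C dual to K[y]/<y^n>: elements are coefficient row vectors
   'rV[K]_n w.r.t. the basis x_0,...,x_{n-1}; Delta(x_i) = sum_{j+k=i} x_j (x) x_k,
   eps(x_i) = delta_{i0}. *)

(* structure constants f_{ij}^k of a linear map C (x) C -> C *)
Definition sconst (K : nzRingType) (n : nat) := 'I_n -> 'I_n -> 'I_n -> K.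

Definition bx {K : nzRingType} {n : nat} (i : 'I_n) : 'rV[K]_n := delta_mx 0 i.

Definition bil (K : nzRingType) (n : nat) (f : sconst K n) (a b : 'rV[K]_n)
  : 'rV[K]_n :=
  \sum_(i < n) \sum_(j < n) (a 0 i * b 0 j) *: \row_(k < n) f i j k.

Definition eps (K : nzRingType) (n : nat) (a : 'rV[K]_n) : K :=
  \sum_(i < n | val i == 0%N) a 0 i.

(* coefficient of x_s (x) x_t in Delta(b) *)
Definition cop (K : nzRingType) (n : nat) (b : 'rV[K]_n) (s t : 'I_n) : K :=
  \sum_(m < n | val m == (s + t)%N) b 0 m.

(* Sweedler sum: sw F b = F(b_(1), b_(2)) for F bilinear *)
Definition sw (K : nzRingType) (n : nat) (F : 'rV[K]_n -> 'rV[K]_n -> 'rV[K]_n)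
  (b : 'rV[K]_n) : 'rV[K]_n :=
  \sum_(s < n) \sum_(t < n) cop b s t *: F (bx s) (bx t).

(* the linear map with structure constants f is a coalgebra morphism
   C (x) C -> C (C (x) C with the tensor product coalgebra structure);
   checked on the basis x_i (x) x_j of C (x) C. *)
Definition coalg_morph (K : nzRingType) (n : nat) (f : sconst K n) : Prop :=
  (forall i j k l : 'I_n,
      \sum_(m < n | val m == (k + l)%N) f i j m =
      \sum_(a < n) \sum_(b < n) \sum_(c < n) \sum_(e < n)
         (if ((a + b)%N == val i) && ((c + e)%N == val j)
          then f a c k * f b e l else 0))
  /\ (forall i j : 'I_n,
      eps (\row_(k < n) f i j k) =
      (if (val i == 0%N) && (val j == 0%N) then 1 else 0)).

(* regular q-magma coalgebra (p, d coalgebra morphisms assumed separately):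
   u encodes a (x) b |-> a^b and v encodes a (x) b |-> a_b *)
Definition regular_qmagma (K : nzRingType) (n : nat) (p d : sconst K n) : Prop :=
  exists u v : sconst K n, coalg_morph u /\ coalg_morph v /\
   forall a b : 'rV[K]_n,
     [/\ sw (fun b1 b2 => bil p (bil u a b1) b2) b = eps b *: a,
         sw (fun b1 b2 => bil u (bil p a b1) b2) b = eps b *: a,
         sw (fun b1 b2 => bil v (bil d a b2) b1) b = eps b *: a &
         sw (fun b1 b2 => bil d (bil v a b2) b1) b = eps b *: a].

Definition qcycle_ids (K : nzRingType) (n : nat) (p d : sconst K n) : Prop :=
  forall a b c : 'rV[K]_n,
    [/\ sw (fun b1 b2 => bil p (bil p a b1) (bil d c b2)) b
        = sw (fun c1 c2 => bil p (bil p a c2) (bil p b c1)) c,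
        sw (fun b1 b2 => bil d (bil p a b1) (bil p c b2)) b
        = sw (fun c1 c2 => bil p (bil d a c2) (bil d b c1)) c &
        sw (fun b1 b2 => bil d (bil d a b1) (bil d c b2)) b
        = sw (fun c1 c2 => bil d (bil d a c2) (bil p b c1)) c].

Definition regular_qcycle (K : nzRingType) (n : nat) (p d : sconst K n) : Prop :=
  [/\ coalg_morph p, coalg_morph d, regular_qmagma p d & qcycle_ids p d].

(* Write alpha, beta, gamma for the structure constants f_{10}^1, f_{01}^1, f_{11}^1 of a
   coalgebra morphism f : C (x) C -> C.  Compatibility with the coproduct expresses f_{ij}^{k+1}
   through the constants with targets x_1 and x_k.  Hence f_{ij}^k = 0 for k > i + j,
   f_{i0}^i = alpha^i, f_{i1}^{i+1} = (i+1) alpha^i beta, and the top degree n - 1 gives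
   n alpha^(n-1) beta = 0.  Regularity makes alpha invertible for p and for d, so both betas vanish
   in characteristic 0, and the first q-cycle identity on (x_1, x_1, x_0) and (x_1, x_0, x_1) forces
   both alphas to be 1; then f_{i1}^i = i gamma.  Put delta_{ij} = d_{ij}^1 - p_{ij}^1.  If delta
   vanishes in total degree < m, the x_1-coefficients of the first two q-cycle identities on basis
   elements give delta_{ji} = - delta_{ij} and (m - 1) gamma delta_{ij} = 0 in degree m, i > 0.
   So delta = 0 by induction on m, and the coproduct recursion propagates d = p to every target. *)

From HB Require Import structures.
From mathcomp Require Import all_boot all_order all_algebra.
From mathcomp Require Import zify ring.
Set Implicit Arguments. Unset Strict Implicit. Unset Printing Implicit Defensive.
Import GRing.Theory.
Local Open Scope ring_scope.

(* lia treats [val x] and [nat_of_ord x] as unrelated atoms; reverting the arithmetic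
   hypotheses and simplifying unfolds the former into the latter. *)
Ltac ord_lia :=
  repeat match goal with
  | H : is_true (leq _ _) |- _ => revert H
  | H : @eq ?T _ _ |- _ => unify T nat; revert H
  | H : ~ @eq ?T _ _ |- _ => unify T nat; revert H
  | H : @eq ?T _ _ -> _ |- _ => unify T nat; revert H
  end; rewrite /=; lia.

Section FourfoldSums.
Variables (V : zmodType) (I : finType).
Implicit Types (F G : I -> I -> I -> I -> V).

Lemma sum4E F :
  \sum_a \sum_b \sum_c \sum_e F a b c e =
  \sum_(q : I * I * I * I) F q.1.1.1 q.1.1.2 q.1.2 q.2.
Proof. by rewrite pair_big pair_big pair_big. Qed.

Lemma sum4_supp1 F a0 b0 c0 e0 :
    (forall a b c e, F a b c e != 0 -> (a, b, c, e) = (a0, b0, c0, e0)) ->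
  \sum_a \sum_b \sum_c \sum_e F a b c e = F a0 b0 c0 e0.
Proof.
move=> F_supp; rewrite sum4E (big_only1 (a0, b0, c0, e0)) // => -[[[a b] c] e] q_ne _.
by apply: contraNeq q_ne => /F_supp ->.
Qed.

Lemma sum4_supp2 F a1 b1 c1 e1 a2 b2 c2 e2 :
    (a1, b1, c1, e1) != (a2, b2, c2, e2) ->
    (forall a b c e, F a b c e != 0 ->
       (a, b, c, e) = (a1, b1, c1, e1) \/ (a, b, c, e) = (a2, b2, c2, e2)) ->
  \sum_a \sum_b \sum_c \sum_e F a b c e = F a1 b1 c1 e1 + F a2 b2 c2 e2.
Proof.
move=> q12 F_supp; rewrite sum4E (bigD1 (a1, b1, c1, e1)) //.
rewrite (bigD1 (a2, b2, c2, e2)) 1?eq_sym //=.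
rewrite big1 ?addr0 // => -[[[a b] c] e] /andP[q_ne2 q_ne1].
have [//|/F_supp[] q_eq] := eqVneq (F a b c e) 0; by rewrite q_eq eqxx in q_ne1 q_ne2.
Qed.

Lemma eq_sum4 F G : (forall a b c e, F a b c e = G a b c e) ->
  \sum_a \sum_b \sum_c \sum_e F a b c e = \sum_a \sum_b \sum_c \sum_e G a b c e.
Proof. by move=> FG; rewrite !sum4E; apply: eq_bigr. Qed.

Lemma sum4_eq0 F :
  (forall a b c e, F a b c e = 0) -> \sum_a \sum_b \sum_c \sum_e F a b c e = 0.
Proof. by move=> F0; rewrite sum4E big1. Qed.

Lemma sum4B F G :
  \sum_a \sum_b \sum_c \sum_e F a b c e - \sum_a \sum_b \sum_c \sum_e G a b c e =
  \sum_a \sum_b \sum_c \sum_e (F a b c e - G a b c e).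
Proof. by rewrite !sum4E -sumrB. Qed.

Lemma sum4D F G :
  \sum_a \sum_b \sum_c \sum_e (F a b c e + G a b c e) =
  \sum_a \sum_b \sum_c \sum_e F a b c e + \sum_a \sum_b \sum_c \sum_e G a b c e.
Proof. by rewrite !sum4E -big_split. Qed.

End FourfoldSums.

Arguments sum4_supp1 {V I F} a0 b0 c0 e0.
Arguments sum4_supp2 {V I F} a1 b1 c1 e1 a2 b2 c2 e2.

Lemma if_mul_neq0 (R : idomainType) (c : bool) (x y : R) :
  (if c then x * y else 0) != 0 -> [/\ c, x != 0 & y != 0].
Proof. by case: c; rewrite ?eqxx // mulf_eq0 negb_or => /andP[-> ->]. Qed.

Lemma if_mul3_neq0 (R : idomainType) (c : bool) (x y z : R) :
  (if c then x * y * z else 0) != 0 -> [/\ c, x != 0, y != 0 & z != 0].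
Proof. by case: c; rewrite ?eqxx // !mulf_eq0 !negb_or => /andP[/andP[-> ->] ->]. Qed.

Section BasisCoefficients.
Variables (K : nzRingType) (n : nat).
Implicit Types (f g h : sconst K n) (i j k s t B : 'I_n).

Lemma bxE i j : (bx i : 'rV[K]_n) 0 j = (i == j)%:R.
Proof. by rewrite /bx mxE eqxx eq_sym. Qed.

Lemma bilE f a b k : (bil f a b) 0 k = \sum_i \sum_j a 0 i * b 0 j * f i j k.
Proof.
by rewrite summxE; apply: eq_bigr => i _; rewrite summxE; apply: eq_bigr => j _; rewrite !mxE.
Qed.

Lemma bil_bx f i j : bil f (bx i) (bx j) = \row_k f i j k.
Proof.
apply/rowP => k; rewrite bilE mxE (big_only1 i) // => [|x x_ne _].
  rewrite (big_only1 j) // => [|y y_ne _]; first by rewrite !bxE !eqxx !mul1r.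
  by rewrite [bx j 0 y]bxE eq_sym (negbTE y_ne) mulr0 mul0r.
by apply: big1 => y _; rewrite bxE eq_sym (negbTE x_ne) !mul0r.
Qed.

Lemma cop_bx B s t : cop (bx B : 'rV[K]_n) s t = ((s + t)%N == B)%:R.
Proof.
rewrite /cop; case: eqP => [stB|stB].
  rewrite (big_only1 B) ?bxE ?eqxx ?stB // => m /negbTE mB _.
  by rewrite bxE eq_sym mB.
rewrite big1 // => m /eqP mE; rewrite bxE; case: eqP => // Bm.
by case: stB; rewrite Bm -mE.
Qed.

Lemma sw_bxE (F : 'rV[K]_n -> 'rV[K]_n -> 'rV[K]_n) B k :
  (sw F (bx B)) 0 k =
  \sum_(s : 'I_n) \sum_(t : 'I_n) if (s + t == B)%N then (F (bx s) (bx t)) 0 k else 0 :> K.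
Proof.
rewrite summxE; apply: eq_bigr => s _; rewrite summxE; apply: eq_bigr => t _.
by rewrite mxE cop_bx mulr_natl mulrb.
Qed.

Lemma eps_bx0 (o0 : 'I_n) : o0 = 0%N :> nat -> eps (bx o0 : 'rV[K]_n) = 1.
Proof.
move=> o0E; rewrite /eps (eq_bigl (pred1 o0)) ?big_pred1_eq ?bxE ?eqxx // => m.
by rewrite /= -val_eqE /= o0E.
Qed.

Lemma sw_bx0 (F : 'rV[K]_n -> 'rV[K]_n -> 'rV[K]_n) (o0 : 'I_n) k :
  o0 = 0%N :> nat -> (sw F (bx o0)) 0 k = (F (bx o0) (bx o0)) 0 k.
Proof.
move=> o0E; have ne0 (s t : 'I_n) : s != o0 -> (s + t == o0)%N = false.
  by move=> /eqP s_ne; apply/eqP => st; apply: s_ne; apply: val_inj; ord_lia.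
rewrite sw_bxE (big_only1 o0) // => [|s s_ne _]; last by apply: big1 => t _; rewrite ne0.
rewrite (big_only1 o0) // => [|t t_ne _]; first by rewrite o0E eqxx.
by rewrite addnC ne0.
Qed.

(* Coefficients of x_k in (a *f b_(1)) *h (c *g b_(2)) and in (a *f c_(2)) *h (b *g c_(1))
   at a = x_i, b = x_B, c = x_j, where u *f v denotes bil f u v: the two shapes of the
   sides of the q-cycle identities. *)
Definition lhs_coef f g h i B j k : K :=
  \sum_(s : 'I_n) \sum_(t : 'I_n) \sum_(a : 'I_n) \sum_(b : 'I_n)
    if (s + t == B)%N then f i s a * g j t b * h a b k else 0.

Definition rhs_coef f g h i B j k : K :=
  \sum_(s : 'I_n) \sum_(t : 'I_n) \sum_(a : 'I_n) \sum_(b : 'I_n)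
    if (s + t == j)%N then f i t a * g B s b * h a b k else 0.

Lemma sw_lhs_coef f g h i B j k :
  (sw (fun b1 b2 => bil h (bil f (bx i) b1) (bil g (bx j) b2)) (bx B)) 0 k =
  lhs_coef f g h i B j k.
Proof.
rewrite sw_bxE; apply: eq_bigr => s _; apply: eq_bigr => t _.
case: ifP => _; last by rewrite big1 // => a _; rewrite big1.
by rewrite !bil_bx bilE; apply: eq_bigr => a _; apply: eq_bigr => b _; rewrite !mxE.
Qed.

Lemma sw_rhs_coef f g h i B j k :
  (sw (fun c1 c2 => bil h (bil f (bx i) c2) (bil g (bx B) c1)) (bx j)) 0 k =
  rhs_coef f g h i B j k.
Proof.
rewrite sw_bxE; apply: eq_bigr => s _; apply: eq_bigr => t _.
case: ifP => _; last by rewrite big1 // => a _; rewrite big1.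
by rewrite !bil_bx bilE; apply: eq_bigr => a _; apply: eq_bigr => b _; rewrite !mxE.
Qed.

Lemma rhs_coefE f g h i B j k : rhs_coef f g h i B j k = lhs_coef f g h i j B k.
Proof.
by rewrite /rhs_coef exchange_big; apply: eq_bigr => s _; apply: eq_bigr => t _; rewrite addnC.
Qed.

End BasisCoefficients.

Section CoalgebraMorphism.
Variables (K : fieldType) (n : nat) (f : sconst K n) (o0 o1 : 'I_n).
Hypotheses (f_cm : coalg_morph f) (o0E : o0 = 0%N :> nat) (o1E : o1 = 1%N :> nat).

Implicit Types (i j k l : 'I_n).

Local Notation alpha := (f o1 o0 o1).
Local Notation beta := (f o0 o1 o1).
Local Notation gamma := (f o1 o1 o1).

Lemma cm_counit i j k :
  val k = 0%N -> f i j k = if (val i == 0%N) && (val j == 0%N) then 1 else 0.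
Proof.
move=> k0; rewrite -(proj2 f_cm) /eps (eq_bigl (pred1 k)) ?big_pred1_eq ?mxE // => m.
by rewrite /= -val_eqE k0.
Qed.

Lemma cm_counit_neq0 i j k : f i j k != 0 -> val k = 0%N -> val i = 0%N /\ val j = 0%N.
Proof.
move=> + k0; rewrite cm_counit //.
by case: (val i =P 0%N) => [->|_]; case: (val j =P 0%N) => [->|_] //=; rewrite eqxx.
Qed.

Lemma cm_coprod k (k' : 'I_n) i j : val k = (val k').+1 ->
  f i j k = \sum_(a : 'I_n) \sum_(b : 'I_n) \sum_(c : 'I_n) \sum_(e : 'I_n)
    if ((a + b)%N == val i) && ((c + e)%N == val j) then f a c o1 * f b e k' else 0.
Proof.
move=> kE; rewrite -(proj1 f_cm) (eq_bigl (pred1 k)) ?big_pred1_eq // => m.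
by rewrite /= -val_eqE kE o1E.
Qed.

Lemma cm_coprod_top l i j : val l = n.-1 ->
  \sum_(a : 'I_n) \sum_(b : 'I_n) \sum_(c : 'I_n) \sum_(e : 'I_n)
    (if ((a + b)%N == val i) && ((c + e)%N == val j) then f a c o1 * f b e l else 0) = 0.
Proof.
move=> lE; rewrite -(proj1 f_cm) big_pred0 // => m.
apply/negbTE; rewrite o1E lE add1n prednK ?neq_ltn ?ltn_ord //.
exact: leq_ltn_trans (leq0n _) (ltn_ord m).
Qed.

Lemma cm001_eq0 : f o0 o0 o1 = 0.
Proof.
have n_gt1 : (1 < n)%N by rewrite -o1E ltn_ord.
have pow m k : val k = m.+1 -> f o0 o0 k = f o0 o0 o1 ^+ m.+1.
  elim: m k => [|m IH] k kE; first by rewrite expr1; congr f; apply: val_inj; ord_lia.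
  have m_lt : (m.+1 < n)%N by rewrite -kE; apply/ltnW/ltn_ord.
  rewrite (cm_coprod (k' := Ordinal m_lt)) // (sum4_supp1 o0 o0 o0 o0).
    by rewrite /= o0E (IH (Ordinal m_lt)) // -exprS.
  move=> a b c e /if_mul_neq0[/andP[/eqP ab /eqP ce] _ _].
  by congr (_, _, _, _); apply: val_inj; ord_lia.
have top_lt : (n.-1 < n)%N by ord_lia.
have := cm_coprod_top (l := Ordinal top_lt) o0 o0 erefl.
rewrite (sum4_supp1 o0 o0 o0 o0); last first.
  move=> a b c e /if_mul_neq0[/andP[/eqP ab /eqP ce] _ _].
  by congr (_, _, _, _); apply: val_inj; ord_lia.
rewrite /= o0E /= (pow n.-2 (Ordinal top_lt)) -?exprS; last by ord_lia.
by move/eqP; rewrite expf_eq0 => /andP[_ /eqP].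
Qed.

Lemma cm_deg i j k : f i j k != 0 -> (k <= i + j)%N.
Proof.
have low (i' j' : 'I_n) : (i' + j')%N = 0%N -> f i' j' o1 = 0.
  by move=> ij0; rewrite -cm001_eq0; congr f; apply: val_inj; ord_lia.
suff vanish m (i' j' k' : 'I_n) : k' = m.+1 :> nat -> (i' + j' < k')%N -> f i' j' k' = 0.
  move=> fij; rewrite leqNgt; apply: contra fij => ijk; apply/eqP.
  by apply: (vanish k.-1); ord_lia.
elim: m i' j' k' => [|m IH] i' j' k' kE ijk.
  have -> : k' = o1 by apply: val_inj; ord_lia.
  by rewrite low //; ord_lia.
have m_lt : (m.+1 < n)%N by rewrite -kE; apply/ltnW/ltn_ord.
rewrite (cm_coprod (k' := Ordinal m_lt)) //; apply: sum4_eq0 => a b c e.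
case: ifP => // /andP[/eqP ab /eqP ce].
have [ac0|ac_pos] := eqVneq (a + c)%N 0%N; first by rewrite low // mul0r.
by rewrite (IH b e (Ordinal m_lt)) ?mulr0 //; ord_lia.
Qed.

Lemma cm_bil_bx10 (g : sconst K n) :
  (bil g (bil f (bx o1) (bx o0)) (bx o0)) 0 o1 = alpha * g o1 o0 o1.
Proof.
rewrite bil_bx bilE (big_only1 o1) // => [|a a_ne _].
  rewrite (big_only1 o0) ?mxE ?bxE ?eqxx ?mulr1 // => b b_ne _.
  by rewrite bxE eq_sym (negbTE b_ne) mulr0 mul0r.
apply: big1 => b _; rewrite mxE (_ : f o1 o0 a = 0) ?mul0r //; apply/eqP; apply: contraR a_ne.
move=> /[dup] /cm_deg a_le /cm_counit_neq0 a_pos; apply/eqP/val_inj; ord_lia.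
Qed.

Lemma cm_diag0 (x : 'I_n) : f x o0 x = alpha ^+ x.
Proof.
suff pow m (x' : 'I_n) : x' = m :> nat -> f x' o0 x' = alpha ^+ m by exact: pow.
elim: m x' => [|m IH] y yE; first by rewrite cm_counit //= yE o0E.
have m_lt : (m < n)%N by have := ltn_ord y; ord_lia.
rewrite (cm_coprod (k' := Ordinal m_lt)) // (sum4_supp1 o1 (Ordinal m_lt) o0 o0).
  by rewrite /= o0E o1E yE add1n !eqxx (IH (Ordinal m_lt)) // exprS.
move=> a b c e /if_mul_neq0[/andP[/eqP ab /eqP ce] /cm_deg ac /cm_deg be].
by congr (_, _, _, _); apply: val_inj; ord_lia.
Qed.

Lemma cm_coprod_succ1 (x x' : 'I_n) : x = x'.+1 :> nat ->
  \sum_(a : 'I_n) \sum_(b : 'I_n) \sum_(c : 'I_n) \sum_(e : 'I_n)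
    (if ((a + b)%N == val x) && ((c + e)%N == val o1) then f a c o1 * f b e x else 0) =
  alpha * f x' o1 x + beta * alpha ^+ x.
Proof.
move=> xE; rewrite (sum4_supp2 o1 x' o0 o1 o0 x o1 o0).
- by rewrite /= (cm_diag0 x) o0E o1E xE add1n add0n addn0 !eqxx.
- by apply/eqP => /(congr1 (fun q => val q.1.1.1)); rewrite /= o0E o1E.
move=> a b c e /if_mul_neq0[/andP[/eqP ab /eqP ce] /cm_deg ac /cm_deg be].
have [c0|c1] : c = 0%N :> nat \/ c = 1%N :> nat by ord_lia.
  by left; congr (_, _, _, _); apply: val_inj; ord_lia.
by right; congr (_, _, _, _); apply: val_inj; ord_lia.
Qed.

Lemma cm_succ1 (x k : 'I_n) : k = x.+1 :> nat -> f x o1 k = (x.+1)%:R * alpha ^+ x * beta.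
Proof.
suff step m (x' k' : 'I_n) : x' = m :> nat -> k' = m.+1 :> nat ->
    f x' o1 k' = (m.+1)%:R * alpha ^+ m * beta by exact: step.
elim: m x' k' => [|m IH] y l yE lE.
  have [-> ->] : y = o0 /\ l = o1 by split; apply: val_inj; ord_lia.
  by rewrite expr0 !mul1r.
have m_lt : (m < n)%N by have := ltn_ord y; ord_lia.
rewrite (cm_coprod (k' := y)); last by ord_lia.
rewrite (cm_coprod_succ1 (x' := Ordinal m_lt)) //.
rewrite (IH (Ordinal m_lt) y) // -[(m.+2)%:R]natr1 yE exprS; ring.
Qed.

Lemma cm011_eq0 : [pchar K] =i pred0 -> alpha != 0 -> beta = 0.
Proof.
move=> char0 alpha_ne0.
have n_gt1 : (1 < n)%N by rewrite -o1E ltn_ord.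
have top_lt : (n.-2.+1 < n)%N by ord_lia.
have sub_lt : (n.-2 < n)%N by ord_lia.
have topE : val (Ordinal top_lt) = n.-1 by ord_lia.
have := cm_coprod_top (Ordinal top_lt) o1 topE.
rewrite (cm_coprod_succ1 (x' := Ordinal sub_lt)) // (cm_succ1 (x := Ordinal sub_lt)) //=.
rewrite (_ : _ + _ = (n.-2.+2)%:R * alpha ^+ n.-2.+1 * beta); last first.
  by rewrite -[(n.-2.+2)%:R]natr1 exprS; ring.
move/eqP; rewrite !mulf_eq0 expf_eq0 (negbTE alpha_ne0) andbF orbF.
by move/pcharf0P: char0 => ->; case/orP => /eqP.
Qed.

Section NormalisedMorphism.
Hypothesis beta0 : beta = 0.

Lemma cm_support x y k : f x y k != 0 ->
  [/\ (k <= x + y)%N, k = 0%N :> nat -> x = 0%N :> nat /\ y = 0%N :> nat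
    & y = 1%N :> nat -> k <> x.+1 :> nat].
Proof.
move=> fxy; split; [exact: cm_deg | exact: cm_counit_neq0 |] => y1 kx.
have yE : y = o1 by apply: val_inj; ord_lia.
by move: fxy; rewrite yE (cm_succ1 kx) beta0 mulr0 eqxx.
Qed.

Lemma cm_diag1 (x : 'I_n) : alpha = 1 -> f x o1 x = x%:R * gamma.
Proof.
move=> alpha1.
suff diag m (y : 'I_n) : y = m :> nat -> f y o1 y = m%:R * gamma by exact: diag.
elim: m y => [|m IH] y yE; first by rewrite cm_counit //= yE o1E mul0r.
have m_lt : (m < n)%N by have := ltn_ord y; ord_lia.
rewrite (cm_coprod (k' := Ordinal m_lt)); last by ord_lia.
rewrite (sum4_supp2 o1 (Ordinal m_lt) o1 o0 o1 (Ordinal m_lt) o0 o1).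
- rewrite /= yE o0E o1E add1n addn0 add0n !eqxx /= (cm_diag0 (Ordinal m_lt)).
  by rewrite (IH (Ordinal m_lt)) // alpha1 expr1n -natr1; ring.
- by apply/eqP => /(congr1 (fun q => val q.1.2)); rewrite /= o0E o1E.
move=> a b c e /if_mul_neq0[/andP[/eqP ab /eqP ce] /cm_support[ac _ ac1] /cm_support[be _ be1]].
have [c0|c1] : c = 0%N :> nat \/ c = 1%N :> nat by ord_lia.
  by right; congr (_, _, _, _); apply: val_inj; ord_lia.
by left; congr (_, _, _, _); apply: val_inj; ord_lia.
Qed.

End NormalisedMorphism.
End CoalgebraMorphism.

Section Agreement.
Variables (K : fieldType) (n : nat) (p d : sconst K n) (o0 o1 : 'I_n).
Hypotheses (p_cm : coalg_morph p) (d_cm : coalg_morph d).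
Hypotheses (o0E : o0 = 0%N :> nat) (o1E : o1 = 1%N :> nat).

Definition agree_below m := forall x y : 'I_n, (x + y < m)%N -> d x y o1 = p x y o1.

Lemma agree_below_diff m x y k :
  agree_below m -> d x y k - p x y k != 0 -> (0 < k)%N /\ (k + m <= x + y + 1)%N.
Proof.
move=> agree; have agree_ge (a c : 'I_n) : d a c o1 != p a c o1 -> (m <= a + c)%N.
  by move=> dp_ne; rewrite leqNgt; apply: contra dp_ne => lt; apply/eqP; exact: agree.
suff diff l (x' y' k' : 'I_n) : k' = l :> nat -> d x' y' k' - p x' y' k' != 0 ->
    (0 < l)%N /\ (l + m <= x' + y' + 1)%N by exact: diff.
elim: l x' y' k' => [|l IH] x' y' k' kE.
  by rewrite (cm_counit d_cm) // (cm_counit p_cm) // subrr eqxx.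
have l_lt : (l < n)%N by have := ltn_ord k'; ord_lia.
move=> dp_ne; split => //; rewrite leqNgt; apply: contra dp_ne => lt.
rewrite (cm_coprod d_cm o1E (k' := Ordinal l_lt)) //.
rewrite (cm_coprod p_cm o1E (k' := Ordinal l_lt)) //.
rewrite sum4B; apply/eqP/sum4_eq0 => a b c e.
case: ifP => [/andP[/eqP ab /eqP ce]|_]; last by rewrite subrr.
set k'' := Ordinal l_lt.
have t1 : (d a c o1 - p a c o1) * d b e k'' = 0.
  have [->|/agree_ge ac] := eqVneq (d a c o1) (p a c o1); first by rewrite subrr mul0r.
  have [->|/(cm_deg d_cm o0E o1E) be] := eqVneq (d b e k'') 0; first by rewrite mulr0.
  by exfalso; ord_lia.
have t2 : p a c o1 * (d b e k'' - p b e k'') = 0.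
  have [->|/(cm_deg p_cm o0E o1E) ac] := eqVneq (p a c o1) 0; first by rewrite mul0r.
  have [->|/(IH _ _ k'' erefl) be] := eqVneq (d b e k'' - p b e k'') 0.
    by rewrite mulr0.
  by exfalso; ord_lia.
rewrite (_ : _ - _ = (d a c o1 - p a c o1) * d b e k'' +
                     p a c o1 * (d b e k'' - p b e k'')); last by ring.
by rewrite t1 t2 addr0.
Qed.

Lemma agree_below_eq : (forall m, agree_below m) -> forall i j k, d i j k = p i j k.
Proof.
move=> agree i j k; apply/eqP; rewrite -subr_eq0.
apply: contraT => /(agree_below_diff (agree (n + n)%N))[_].
by have := ltn_ord i; have := ltn_ord j; ord_lia.
Qed.

End Agreement.

Section QCycle.
Variables (K : fieldType) (n : nat) (p d : sconst K n) (o0 o1 : 'I_n).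
Hypotheses (p_cm : coalg_morph p) (d_cm : coalg_morph d) (pd_qcycle : qcycle_ids p d).
Hypotheses (o0E : o0 = 0%N :> nat) (o1E : o1 = 1%N :> nat).
Hypotheses (p_beta0 : p o0 o1 o1 = 0) (d_beta0 : d o0 o1 o1 = 0).
Hypothesis gamma_neq0 : p o1 o1 o1 != 0.
Implicit Types (i j k B : 'I_n).

Local Notation gamma := (p o1 o1 o1).
Local Notation p_supp := (cm_support p_cm o0E o1E p_beta0).
Local Notation d_supp := (cm_support d_cm o0E o1E d_beta0).

Lemma qcycle_coef1 i B j k : lhs_coef p d p i B j k = rhs_coef p p p i B j k.
Proof.
have [E _ _] := pd_qcycle (bx i) (bx B) (bx j).
by move/(congr1 (fun v : 'rV[K]_n => v 0 k)): E; rewrite sw_lhs_coef sw_rhs_coef.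
Qed.

Lemma qcycle_coef2 i B j k : lhs_coef p p d i B j k = rhs_coef d d p i B j k.
Proof.
have [_ E _] := pd_qcycle (bx i) (bx B) (bx j).
by move/(congr1 (fun v : 'rV[K]_n => v 0 k)): E; rewrite sw_lhs_coef sw_rhs_coef.
Qed.

Lemma qcycle_alpha1 : p o1 o0 o1 != 0 -> p o1 o0 o1 = 1 /\ d o1 o0 o1 = 1.
Proof.
move=> alpha_neq0.
have p000 : p o0 o0 o0 = 1 by rewrite (cm_counit p_cm) //= o0E.
have d000 : d o0 o0 o0 = 1 by rewrite (cm_counit d_cm) //= o0E.
(* At (x_1, x_1, x_0) the identity reads gamma alpha = alpha^2 gamma, and at
   (x_1, x_0, x_1) it reads alpha alpha_d gamma = gamma alpha. *)
have p_alpha1 : p o1 o0 o1 = 1.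
  have := qcycle_coef1 o1 o1 o0 o1.
  rewrite /lhs_coef /rhs_coef (sum4_supp1 o1 o0 o1 o0); last first.
    move=> s t a b /if_mul3_neq0[/eqP st /p_supp[? ? ?] /d_supp[? ? ?] /p_supp[? ? ?]].
    by congr (_, _, _, _); apply: val_inj; ord_lia.
  rewrite (sum4_supp1 o0 o0 o1 o1); last first.
    move=> s t a b /if_mul3_neq0[/eqP st /p_supp[? ? ?] /p_supp[? ? ?] /p_supp[? ? ?]].
    by congr (_, _, _, _); apply: val_inj; ord_lia.
  rewrite /= o0E o1E /= d000 mulr1 => /eqP.
  rewrite -subr_eq0 (_ : _ - _ = p o1 o0 o1 * gamma * (1 - p o1 o0 o1)); last by ring.
  by rewrite !mulf_eq0 (negbTE alpha_neq0) (negbTE gamma_neq0) subr_eq0 => /eqP.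
split => //; have := qcycle_coef1 o1 o0 o1 o1.
rewrite /lhs_coef /rhs_coef (sum4_supp1 o0 o0 o1 o1); last first.
  move=> s t a b /if_mul3_neq0[/eqP st /p_supp[? ? ?] /d_supp[? ? ?] /p_supp[? ? ?]].
  by congr (_, _, _, _); apply: val_inj; ord_lia.
rewrite (sum4_supp1 o0 o1 o1 o0); last first.
  move=> s t a b /if_mul3_neq0[/eqP st /p_supp[? ? ?] /p_supp[? ? ?] /p_supp[? ? ?]].
  by congr (_, _, _, _); apply: val_inj; ord_lia.
rewrite /= o0E o1E /= p000 p_alpha1 !mul1r !mulr1 -[X in _ = X]mul1r.
exact: (mulIf gamma_neq0).
Qed.

Section Normalised.
Hypotheses (p_alpha1 : p o1 o0 o1 = 1) (d_alpha1 : d o1 o0 o1 = 1).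
Hypothesis char0 : [pchar K] =i pred0.

Local Notation delta x y := (d x y o1 - p x y o1).

Section Step.
Variable m : nat.
Hypotheses (m_ge2 : (2 <= m)%N) (agree : agree_below p d o1 m).
Local Notation diff_supp := (agree_below_diff p_cm d_cm o0E o1E agree).

Lemma lhs_coef_ppd_sub i j : (i + j)%N = m ->
  lhs_coef p p d i o1 j o1 - lhs_coef p p p i o1 j o1 = (i + j)%:R * gamma * delta i j.
Proof.
move=> ijE; rewrite sum4B (eq_sum4 (G := fun s t a b : 'I_n =>
  if (s + t == o1)%N then p i s a * p j t b * delta a b else 0)); last first.
  by move=> s t a b; case: ifP; rewrite ?subrr // -mulrBr.
rewrite (sum4_supp2 o0 o1 i j o1 o0 i j).
- rewrite /= o0E o1E add0n addn0 eqxx (cm_diag0 p_cm o0E o1E i) (cm_diag0 p_cm o0E o1E j).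
  rewrite (cm_diag1 p_cm o0E o1E p_beta0 i) // (cm_diag1 p_cm o0E o1E p_beta0 j) //.
  by rewrite p_alpha1 !expr1n natrD; ring.
- by apply/eqP => /(congr1 (fun q => val q.1.1.1)); rewrite /= o0E o1E.
move=> s t a b /if_mul3_neq0[/eqP st /p_supp[? ? ?] /p_supp[? ? ?] /diff_supp[? ?]].
have [s0|s1] : s = 0%N :> nat \/ s = 1%N :> nat by ord_lia.
  by left; congr (_, _, _, _); apply: val_inj; ord_lia.
by right; congr (_, _, _, _); apply: val_inj; ord_lia.
Qed.

Lemma lhs_coef_pdp_sub i B j : (0 < i)%N -> (i + B + j)%N = m.+1 ->
  lhs_coef p d p i B j o1 - lhs_coef p p p i B j o1 = p i o0 o1 * delta j B * gamma.
Proof.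
move=> i_gt0 iBjE; rewrite sum4B (eq_sum4 (G := fun s t a b : 'I_n =>
  if (s + t == B)%N then p i s a * (d j t b - p j t b) * p a b o1 else 0)); last first.
  by move=> s t a b; case: ifP; rewrite ?subrr // -mulrBl -mulrBr.
rewrite (sum4_supp1 o0 B o1 o1); first by rewrite /= o0E add0n eqxx.
move=> s t a b /if_mul3_neq0[/eqP st /p_supp[? ? ?] /diff_supp[? ?] /p_supp[? ? ?]].
by congr (_, _, _, _); apply: val_inj; ord_lia.
Qed.

Lemma rhs_coef_ddp_sub i j : (0 < i)%N -> (i + j)%N = m ->
  rhs_coef d d p i o1 j o1 - rhs_coef p p p i o1 j o1 =
  delta i j * gamma + p i o0 o1 * delta o1 j * gamma.
Proof.
move=> i_gt0 ijE; rewrite sum4B (eq_sum4 (G := fun s t a b : 'I_n =>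
  (if (s + t == j)%N then (d i t a - p i t a) * d o1 s b * p a b o1 else 0) +
  (if (s + t == j)%N then p i t a * (d o1 s b - p o1 s b) * p a b o1 else 0))); last first.
  by move=> s t a b; case: ifP => _; [ring | rewrite subrr addr0].
rewrite sum4D (sum4_supp1 o0 j o1 o1); last first.
  move=> s t a b /if_mul3_neq0[/eqP st /diff_supp[? ?] /d_supp[? ? ?] /p_supp[? ? ?]].
  by congr (_, _, _, _); apply: val_inj; ord_lia.
rewrite (sum4_supp1 j o0 o1 o1); last first.
  move=> s t a b /if_mul3_neq0[/eqP st /p_supp[? ? ?] /diff_supp[? ?] /p_supp[? ? ?]].
  by congr (_, _, _, _); apply: val_inj; ord_lia.
by rewrite /= o0E add0n addn0 eqxx d_alpha1 mulr1.
Qed.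

Lemma delta_antisym B j : (B + j)%N = m -> delta j B + delta B j = 0.
Proof.
have swap B' j' : (B' + j')%N = m ->
    lhs_coef p p p o1 j' B' o1 - lhs_coef p p p o1 B' j' o1 = delta j' B' * gamma.
  move=> E; rewrite -rhs_coefE -qcycle_coef1 lhs_coef_pdp_sub ?p_alpha1 ?mul1r //; ord_lia.
move=> BjE; have : (delta j B + delta B j) * gamma = 0.
  by rewrite mulrDl -swap // -swap ?(addnC j) //; ring.
by move/eqP; rewrite mulf_eq0 (negbTE gamma_neq0) orbF => /eqP.
Qed.

Lemma delta_pos i j : (0 < i)%N -> (i + j)%N = m -> delta i j = 0.
Proof.
move=> i_gt0 ijE.
have s1 := lhs_coef_ppd_sub ijE; rewrite qcycle_coef2 in s1.
have s2 := lhs_coef_pdp_sub (B := o1) (j := j) i_gt0 ltac:(ord_lia).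
rewrite qcycle_coef1 in s2.
have s3 := rhs_coef_ddp_sub i_gt0 ijE.
have sym : p i o0 o1 * (delta j o1 + delta o1 j) = 0.
  have [i1|i_ge2] := eqVneq (i : nat) 1%N.
    by rewrite (_ : i = o1) ?delta_antisym ?mulr0 //; [ord_lia | apply: val_inj; ord_lia].
  by rewrite !agree ?subrr ?addr0 ?mulr0 //; ord_lia.
have key : (i + j)%:R * gamma * delta i j - p i o0 o1 * delta j o1 * gamma -
    (delta i j * gamma + p i o0 o1 * delta o1 j * gamma) = 0.
  by rewrite -s1 -s2 -s3; ring.
have : ((i + j).-1)%:R * gamma * delta i j = 0.
  transitivity ((i + j)%:R * gamma * delta i j - p i o0 o1 * delta j o1 * gamma -
    (delta i j * gamma + p i o0 o1 * delta o1 j * gamma) +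
    gamma * (p i o0 o1 * (delta j o1 + delta o1 j))).
    by rewrite -[in RHS](prednK (_ : 0 < i + j)%N) -?natr1; [ring | ord_lia].
  by rewrite key sym mulr0 addr0.
move/eqP; rewrite !mulf_eq0 (negbTE gamma_neq0) orbF.
by move/pcharf0P: char0 => ->; case/orP => /eqP //; ord_lia.
Qed.

Lemma agree_below_succ : agree_below p d o1 m.+1.
Proof.
move=> x y; rewrite ltnS leq_eqVlt => /orP[/eqP xyE|]; last exact: agree.
apply/eqP; rewrite -subr_eq0; apply/eqP.
have [x0|x_gt0] := posnP x; last exact: delta_pos.
have yx0 : delta y x = 0 by apply: delta_pos; ord_lia.
by have := delta_antisym (B := y) (j := x); rewrite yx0 addr0; apply; ord_lia.
Qed.

End Step.

Lemma qcycle_agree m : agree_below p d o1 m.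
Proof.
have agree2 : agree_below p d o1 2.
  have small (z : 'I_n) : (z < 2)%N -> z = o0 \/ z = o1.
    move=> z_lt; have [z0|z1] : z = 0%N :> nat \/ z = 1%N :> nat by ord_lia.
      by left; apply: val_inj; ord_lia.
    by right; apply: val_inj; ord_lia.
  move=> x y xy_lt.
  have [x0|x1] := small x ltac:(ord_lia); have [y0|y1] := small y ltac:(ord_lia); subst x y.
  - by rewrite (cm001_eq0 p_cm o0E o1E) (cm001_eq0 d_cm o0E o1E).
  - by rewrite p_beta0 d_beta0.
  - by rewrite p_alpha1 d_alpha1.
  - by exfalso; ord_lia.
elim: m => [//|m IH].
have [m_lt2|m_ge2] := ltnP m 2; last exact: agree_below_succ.
by move=> x y xy_lt; apply: agree2; ord_lia.
Qed.

End Normalised.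
End QCycle.

Lemma regular_qmagma_alpha_neq0 (K : fieldType) n (p d : sconst K n) (o0 o1 : 'I_n) :
    coalg_morph d -> o0 = 0%N :> nat -> o1 = 1%N :> nat -> regular_qmagma p d ->
  p o1 o0 o1 != 0 /\ d o1 o0 o1 != 0.
Proof.
(* x_0 is grouplike, so at a = x_1, b = x_0 the regularity identities give
   u_{10}^1 p_{10}^1 = 1 and d_{10}^1 v_{10}^1 = 1. *)
move=> d_cm o0E o1E [u [v [u_cm [v_cm reg]]]]; have [Ru _ Rv _] := reg (bx o1) (bx o0).
have coef1 (F : 'rV[K]_n -> 'rV[K]_n -> 'rV[K]_n) :
    sw F (bx o0) = eps (bx o0) *: bx o1 -> (F (bx o0) (bx o0)) 0 o1 = 1.
  move/(congr1 (fun w : 'rV[K]_n => w 0 o1)).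
  by rewrite sw_bx0 // mxE bxE eqxx eps_bx0 ?mulr1.
split; apply/eqP => alpha0.
  move: (coef1 _ Ru); rewrite (cm_bil_bx10 u_cm o0E o1E) alpha0 mulr0.
  by move/esym/eqP; rewrite oner_eq0.
move: (coef1 _ Rv); rewrite (cm_bil_bx10 d_cm o0E o1E) alpha0 mul0r.
by move/esym/eqP; rewrite oner_eq0.
Qed.

Unset Implicit Arguments.

Theorem theorem4p4 (K : closedFieldType) (n : nat) (p d : sconst K n) :
  [pchar K] =i pred0 ->
  (2 <= n)%N ->
  regular_qcycle p d ->
  (forall one : 'I_n, val one = 1%N -> p one one one != 0) ->
  forall i j k : 'I_n, d i j k = p i j k.
Proof.
move=> char0 n_gt1 [p_cm d_cm pd_qmagma pd_qcycle] gamma_neq0.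
pose o0 := Ordinal (ltnW n_gt1); pose o1 := Ordinal n_gt1.
have o0E : o0 = 0%N :> nat by []; have o1E : o1 = 1%N :> nat by [].
have [p_alpha_neq0 d_alpha_neq0] := regular_qmagma_alpha_neq0 d_cm o0E o1E pd_qmagma.
have p_beta0 := cm011_eq0 p_cm o0E o1E char0 p_alpha_neq0.
have d_beta0 := cm011_eq0 d_cm o0E o1E char0 d_alpha_neq0.
have gamma_o1 : p o1 o1 o1 != 0 by exact: gamma_neq0.
have [p_alpha1 d_alpha1] :=
  qcycle_alpha1 p_cm d_cm pd_qcycle o0E o1E p_beta0 d_beta0 gamma_o1 p_alpha_neq0.
apply: (agree_below_eq p_cm d_cm o0E o1E) => m.
exact: qcycle_agree p_cm d_cm pd_qcycle o0E o1E p_beta0 d_beta0 gamma_o1 p_alpha1 d_alpha1 char0 m.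
Qed.
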